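(* Let $\phi\colon\mathbb{R}\to\mathbb{R}$ be an increasing homeomorphism with $\phi(0)=0$, let $f\colon\mathbb{R}\to\mathbb{R}$ be continuous and let $h\colon[0,T]\times\mathbb{R}\to\mathbb{R}$ be a Carathéodory function such that there exists $\gamma\in L^1([0,T],\mathbb{R}^+)$ with $h(t,u)\le\gamma(t)$ for a.e. $t\in[0,T]$ and all $u\in\mathbb{R}$. For $\lambda\in\,]0,1]$ consider $$(\phi(u'))'+\lambda f(u)u'+\lambda h(t,u)=0. \qquad (\ast_\lambda)$$ Then there exists a constant $K_0=K_0(\gamma)$ such that every $T$-periodic solution $u$ of $(\ast_\lambda)$ with $\lambda\in\,]0,1]$ satisfies $\max u-\min u\le K_0$ and $\|u'\|_{L^1}\le K_0$. Moreover, for any $\ell_1<\ell_2$ there exists $K_1>0$ such that every $T$-periodic solution $u$ of $(\ast_\lambda)$ with $\lambda\in\,]0,1]$ and $\ell_1\le u(t)\le\ell_2$ for all $t\in[0,T]$ satisfies $\|u'\|_\infty\le K_1$.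
   Context: A $T$-periodic solution is a $u\in\mathcal{C}^1([0,T])$ with $u(0)=u(T)$, $u'(0)=u'(T)$, $\phi(u')$ absolutely continuous, satisfying the equation a.e. A Carathéodory function is measurable in $t$, continuous in $u$, and for each $r>0$ bounded in absolute value on $[0,T]\times[-r,r]$ by an $L^1$ function of $t$. $\mathbb{R}^+$ denotes the nonnegative reals. *)

From HB Require Import structures.
From mathcomp Require Import all_boot all_order all_algebra.
From mathcomp Require Import all_classical all_reals all_analysis.
Set Implicit Arguments. Unset Strict Implicit. Unset Printing Implicit Defensive.
Import Order.TTheory GRing.Theory Num.Theory.
Import numFieldNormedType.Exports.
Local Open Scope classical_set_scope.
Local Open Scope ring_scope.

Definition incr_homeo_fix0 (R : realType) (phi : R -> R) : Prop :=
  {homo phi : x y / x < y} /\ continuous phi /\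
  (exists psi : R -> R, cancel phi psi /\ cancel psi phi /\ continuous psi) /\
  phi 0 = 0.

Definition abs_cont_on (R : realType) (x y : R) (F : R -> R) : Prop :=
  forall e : R, 0 < e -> exists2 d : R, 0 < d &
    forall (n : nat) (a b : 'I_n -> R),
      (forall i, x <= a i /\ a i <= b i /\ b i <= y) ->
      (forall i j : 'I_n, (i < j)%N -> b i <= a j) ->
      \sum_(i < n) (b i - a i) < d ->
      \sum_(i < n) `|F (b i) - F (a i)| < e.

Definition caratheodory (R : realType) (T : R) (h : R -> R -> R) : Prop :=
  (forall x : R, measurable_fun `[0%R, T]%classic (fun t => h t x)) /\
  (forall t : R, 0 <= t <= T -> continuous (h t)) /\
  (forall r : R, 0 < r -> exists g : R -> R,
      (@lebesgue_measure R).-integrable `[0%R, T]%classic (EFin \o g) /\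
      forall t x : R, 0 <= t <= T -> `|x| <= r -> `|h t x| <= g t).

Definition C1_on (R : realType) (T : R) (u du : R -> R) : Prop :=
  {within `[0%R, T]%classic, continuous u} /\
  {within `[0%R, T]%classic, continuous du} /\
  (forall t : R, 0 < t < T -> is_derive t 1 u (du t)) /\
  ((fun s : R => s^-1 * (u s - u 0)) @ 0^'+ --> du 0) /\
  ((fun s : R => s^-1 * (u (T + s) - u T)) @ 0^'- --> du T).

Definition periodic_solution (R : realType) (T : R) (phi f : R -> R)
    (h : R -> R -> R) (lam : R) (u du : R -> R) : Prop :=
  C1_on T u du /\ u 0 = u T /\ du 0 = du T /\
  abs_cont_on 0 T (phi \o du) /\
  {ae @lebesgue_measure R, forall t : R, 0 < t < T ->
     derivable (phi \o du) t 1 /\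
     derive1 (phi \o du) t + lam * f (u t) * du t + lam * h t (u t) = 0}.

From HB Require Import structures.
From mathcomp Require Import all_boot all_order all_algebra.
From mathcomp Require Import all_classical all_reals all_analysis.
From mathcomp Require Import ring lra.
Set Implicit Arguments. Unset Strict Implicit. Unset Printing Implicit Defensive.
Import Order.TTheory GRing.Theory Num.Theory.
Import numFieldNormedType.Exports.
Local Open Scope classical_set_scope.
Local Open Scope ring_scope.

(* Let G t = \int_0^t gamma and let F be a primitive of f. Along a solution,
   the energy E t = phi (u' t) + lam F (u t) is absolutely continuous with
   E' = - lam h(t, u) >= - gamma a.e., so E + G is nondecreasing on [0, T].
   As E is T-periodic, this gives E t - E s <= G T for all s, t.  If u' t > 0,
   periodicity of u provides s with u s = u t and u' s <= 0, whence
   phi (u' t) <= E t - E s <= G T; symmetrically phi (u' t) >= - G T.  Hence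
   |u'| <= |phi^-1 (G T)| + |phi^-1 (- G T)| =: K, independently of f, h, lam
   and of the bounds l1, l2 on u (nor is the Caratheodory property of h used),
   and K T bounds both the oscillation of u and the L^1 norm of u'.

   The monotonicity of E + G is derived from its a.e. nonnegative derivative
   by covering the exceptional null set with an open set of small measure:
   on the intervals of that cover the increments are controlled by absolute
   continuity, elsewhere by the derivative, and a supremum argument carries the
   lower bound across the whole interval. *)

Section DifferenceQuotients.
Variable R : realType.

Lemma near_dnbhs0_ball (P : R -> Prop) : (\forall h \near 0^', P h) ->
  exists2 e : R, 0 < e & forall h, h != 0 -> `|h| < e -> P h.
Proof.
move=> /nbhs_ballP[e e0 He]; exists e => // h h0 he; apply: He => //.
by rewrite /ball /= sub0r normrN.
Qed.

Lemma near_left0_itv (P : R -> Prop) : (\forall h \near 0^'-, P h) ->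
  exists2 e : R, 0 < e & forall h, -e < h < 0 -> P h.
Proof.
move=> /nbhs_ballP[e e0 He]; exists e => // h /andP[h1 h2]; apply: He => //.
by rewrite /ball /= sub0r normrN ltr0_norm // ltrNl.
Qed.

Lemma near_right0_itv (P : R -> Prop) : (\forall h \near 0^'+, P h) ->
  exists2 e : R, 0 < e & forall h, 0 < h < e -> P h.
Proof.
move=> /nbhs_ballP[e e0 He]; exists e => // h /andP[h1 h2]; apply: He => //.
by rewrite /ball /= sub0r normrN gtr0_norm.
Qed.

Lemma is_derive_diff_quotient (u : R -> R) (t d : R) : is_derive t 1 u d ->
  forall e : R, 0 < e -> exists2 k : R, 0 < k &
    forall h, h != 0 -> `|h| < k -> `|h^-1 * (u (t + h) - u t) - d| < e.
Proof.
move=> [der val] e e0.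
have hc : (fun h : R => h^-1 *: ((u \o shift t) (h *: 1) - u t)) @ 0^' --> d.
  by rewrite -val; exact: der.
move/cvgrPdist_lt : hc => /(_ e e0) /near_dnbhs0_ball[k k0 Hk].
exists k => // h h0 hk; have := Hk h h0 hk.
by rewrite -normrN opprB -[h%:A]/(h * 1) mulr1 /= /shift (addrC h t).
Qed.

Lemma within_itv_continuous_dist (a b t : R) (u : R -> R) :
  {within `[a, b], continuous u} -> a <= t <= b ->
  forall e : R, 0 < e -> exists2 k : R, 0 < k &
    forall z, a <= z <= b -> `|z - t| < k -> `|u z - u t| < e.
Proof.
move=> cu ht e e0.
have At : `[a, b]%classic t by rewrite /= in_itv /=.
move/subspace_continuousP : cu => /(_ t At) /cvgrPdist_lt /(_ e e0).
rewrite near_withinE => /nbhs_ballP[k k0 Hk].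
exists k => // z hz hzt; have := Hk z; rewrite /ball /= -normrN opprB => /(_ hzt).
by rewrite -normrN opprB; apply; rewrite /= in_itv /=.
Qed.

Definition right_derivative_on (a b : R) (u du : R -> R) :=
  forall t, a <= t < b -> forall e : R, 0 < e -> exists2 k : R, 0 < k &
    forall h, 0 < h < k -> `|h^-1 * (u (t + h) - u t) - du t| < e.

Definition left_derivative_on (a b : R) (u du : R -> R) :=
  forall t, a < t <= b -> forall e : R, 0 < e -> exists2 k : R, 0 < k &
    forall h, - k < h < 0 -> `|h^-1 * (u (t + h) - u t) - du t| < e.

Lemma C1_on_right_derivative (T : R) (u du : R -> R) :
  C1_on T u du -> right_derivative_on 0 T u du.
Proof.
move=> [_ [_ [hd [h0 _]]]] t /andP[t0 tT] e e0.
have [<-|tpos] := eqVneq 0 t.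
  move/cvgrPdist_lt : h0 => /(_ e e0) /near_right0_itv[k k0 Hk].
  by exists k => // h /Hk; rewrite -normrN opprB add0r.
have tp : 0 < t by rewrite lt_def eq_sym tpos t0.
have [k k0 Hk] := is_derive_diff_quotient (hd t (ltac:(by rewrite tp tT))) e0.
exists k => // h /andP[h1 h2]; apply: Hk; first by rewrite gt_eqF.
by rewrite gtr0_norm.
Qed.

Lemma C1_on_left_derivative (T : R) (u du : R -> R) :
  C1_on T u du -> left_derivative_on 0 T u du.
Proof.
move=> [_ [_ [hd [_ h1]]]] t /andP[t0 tT] e e0.
have [->|tpos] := eqVneq t T.
  move/cvgrPdist_lt : h1 => /(_ e e0) /near_left0_itv[k k0 Hk].
  by exists k => // h /Hk; rewrite -normrN opprB.
have tp : t < T by rewrite lt_neqAle tpos tT.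
have [k k0 Hk] := is_derive_diff_quotient (hd t (ltac:(by rewrite tp t0))) e0.
exists k => // h /andP[hh1 hh2]; apply: Hk; first by rewrite lt_eqF.
by rewrite ltr0_norm // ltrNl.
Qed.

Lemma right_derivative_onN (a b : R) (u du : R -> R) :
  right_derivative_on a b u du -> right_derivative_on a b (-%R \o u) (-%R \o du).
Proof.
move=> ru s hs e e0; have [k k0 Hk] := ru s hs e e0; exists k => // h /Hk.
by rewrite -normrN /=; congr (`|_| < _); ring.
Qed.

Lemma left_derivative_onN (a b : R) (u du : R -> R) :
  left_derivative_on a b u du -> left_derivative_on a b (-%R \o u) (-%R \o du).
Proof.
move=> lu s hs e e0; have [k k0 Hk] := lu s hs e e0; exists k => // h /Hk.
by rewrite -normrN /=; congr (`|_| < _); ring.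
Qed.

End DifferenceQuotients.

Section PeriodicCrossing.
Variables (R : realType) (a b : R) (u du : R -> R).
Hypotheses (cu : {within `[a, b], continuous u})
  (ru : right_derivative_on a b u du) (lu : left_derivative_on a b u du).

Lemma right_derivative_gt0_increase t : a <= t < b -> 0 < du t ->
  exists2 k : R, 0 < k & forall h, 0 < h < k -> u t < u (t + h).
Proof.
move=> tin dpos; have [k k0 Hk] := ru tin dpos; exists k => // h hk.
have /andP[h0 _] := hk; have := Hk h hk; rewrite ltr_norml => /andP[hq _].
have : 0 < h^-1 * (u (t + h) - u t) by lra.
by rewrite pmulr_rgt0 ?invr_gt0 // subr_gt0.
Qed.

Lemma left_derivative_gt0_increase t : a < t <= b -> 0 < du t ->
  exists2 k : R, 0 < k & forall h, - k < h < 0 -> u (t + h) < u t.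
Proof.
move=> tin dpos; have [k k0 Hk] := lu tin dpos; exists k => // h hk.
have /andP[_ h0] := hk; have := Hk h hk; rewrite ltr_norml => /andP[hq _].
have : 0 < h^-1 * (u (t + h) - u t) by lra.
by rewrite nmulr_rgt0 ?invr_lt0 // subr_lt0.
Qed.

Lemma first_crossing (x p q : R) : a <= p -> p < q -> q <= b ->
  x < u p -> u q <= x -> exists s, [/\ p < s <= q, u s = x & du s <= 0].
Proof.
move=> ap pq qb xp qx.
pose S := [set z | p <= z <= q /\ u z <= x].
have Sq : S q by split => //; rewrite (ltW pq) lexx.
have hiS : has_inf S by split; [exists q | exists p => z [/andP[]]].
set s := inf S.
have ps : p <= s by apply: lb_le_inf => //; [exists q | move=> z [/andP[]]].
have sq : s <= q by apply: (ge_inf hiS.2).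
have sin : a <= s <= b by apply/andP; split; lra.
have below k : 0 < k -> p < s -> exists z, [/\ p < z, z < s, s - k < z & ~ S z].
  move=> k0 ps'; have m_lt : Num.max p (s - k) < s by rewrite gt_max ps' /=; lra.
  have [+ zs] := midf_lt m_lt; rewrite gt_max => /andP[pz kz].
  exists ((Num.max p (s - k) + s) / 2); split => // Sz.
  by have := ge_inf hiS.2 Sz; lra.
have us_le : u s <= x.
  rewrite leNgt; apply/negP => xs.
  have [k k0 Hk] := within_itv_continuous_dist cu sin (ltac:(lra) : 0 < u s - x).
  have [z [zin uz] zs] := inf_adherent k0 hiS; have /andP[pz zq] := zin.
  have sz : s <= z by apply: (ge_inf hiS.2).
  have := Hk z (ltac:(apply/andP; split; lra)) (ltac:(rewrite ger0_norm; lra)).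
  by rewrite ltr_norml; lra.
have ps' : p < s by rewrite lt_def ps andbT; apply/eqP => sp; move: us_le; rewrite sp; lra.
have us_ge : x <= u s.
  rewrite leNgt; apply/negP => xs.
  have [k k0 Hk] := within_itv_continuous_dist cu sin (ltac:(lra) : 0 < x - u s).
  have [z [pz zs sz []]] := below k k0 ps'; split; first by apply/andP; split; lra.
  have := Hk z (ltac:(apply/andP; split; lra)) (ltac:(rewrite ltr0_norm; lra)).
  by rewrite ltr_norml; lra.
exists s; split; [by rewrite ps' sq | by apply/eqP; rewrite eq_le us_le us_ge |].
rewrite leNgt; apply/negP => dpos.
have sin' : a < s <= b by apply/andP; split; lra.
have [k k0 Hk] := left_derivative_gt0_increase sin' dpos.
have [z [pz zs sz []]] := below k k0 ps'; split; first by apply/andP; split; lra.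
have := Hk (z - s) (ltac:(apply/andP; split; lra)).
by rewrite addrCA subrr addr0; lra.
Qed.

Hypothesis uab : u a = u b.

Lemma periodic_crossing_lt t : a <= t < b -> 0 < du t ->
  exists s, [/\ a <= s <= b, u s = u t & du s <= 0].
Proof.
move=> tin dpos; have /andP[a_le_t tb] := tin.
have [k k0 Hk] := right_derivative_gt0_increase tin dpos.
have kpos : t < Num.min (t + k) b by rewrite lt_min tb andbT; lra.
have [+ +] := midf_lt kpos; rewrite lt_min => tp /andP[pk pb].
move: ((t + Num.min (t + k) b) / 2) tp pk pb => p tp pk pb.
have up : u t < u p.
  by have := Hk (p - t) (ltac:(apply/andP; split; lra)); rewrite addrCA subrr addr0.
have [[q [/andP[pq qb] uq]]|nq] := pselect (exists q, p <= q <= b /\ u q <= u t).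
  have pq' : p < q.
    by rewrite lt_neqAle pq andbT; apply/eqP => pq''; move: uq; rewrite -pq''; lra.
  have ap : a <= p by lra.
  have [s [/andP[ps sq] us ds]] := first_crossing ap pq' qb up uq.
  by exists s; split => //; apply/andP; split; lra.
have uta : u t < u a.
  rewrite uab ltNge; apply/negP => ubt; apply: nq; exists b.
  by rewrite ubt lexx (ltW pb).
have a_lt_t : a < t.
  by rewrite lt_neqAle a_le_t andbT; apply/eqP => ta; move: uta; rewrite -ta; lra.
have [s [/andP[ps sq] us ds]] := first_crossing (lexx a) a_lt_t (ltW tb) uta (lexx _).
by exists s; split => //; apply/andP; split; lra.
Qed.

Hypotheses (ab : a < b) (duab : du a = du b).

Lemma periodic_crossing_nonpos t : a <= t <= b -> 0 < du t ->
  exists s, [/\ a <= s <= b, u s = u t & du s <= 0].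
Proof.
move=> /andP[a_le_t tb] dpos; have [tb'|tbe] := ltP t b.
  by apply: periodic_crossing_lt => //; rewrite a_le_t.
have tE : t = b by apply/eqP; rewrite eq_le tb tbe.
rewrite tE -uab; apply: periodic_crossing_lt; first by rewrite lexx ab.
by rewrite duab -tE.
Qed.

End PeriodicCrossing.

Lemma periodic_crossing_nonneg (R : realType) (a b : R) (u du : R -> R) :
  {within `[a, b], continuous u} ->
  right_derivative_on a b u du -> left_derivative_on a b u du ->
  u a = u b -> a < b -> du a = du b -> forall t, a <= t <= b -> du t < 0 ->
  exists s, [/\ a <= s <= b, u s = u t & 0 <= du s].
Proof.
move=> cu ru lu uab ab duab t tin dneg.
have cNu : {within `[a, b], continuous (-%R \o u)}.
  by move=> x; apply: continuousN; exact: cu.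
have [s [sin us ds]] := periodic_crossing_nonpos cNu (right_derivative_onN ru)
  (left_derivative_onN lu) (congr1 -%R uab) ab (congr1 -%R duab) tin
  (ltac:(by rewrite /= oppr_gt0)).
by exists s; split => //; [exact: oppr_inj | rewrite -oppr_le0].
Qed.

Section NonoverlappingFamilies.
Variable R : realType.
Implicit Types (a b x y : R) (U : set R) (sq : seq (R * R)).

Definition nonoverlapping a b sq :=
  (forall i, (i < size sq)%N -> a <= (nth (0, 0) sq i).1 /\
     (nth (0, 0) sq i).1 <= (nth (0, 0) sq i).2 /\ (nth (0, 0) sq i).2 <= b) /\
  (forall i j, (i < j)%N -> (j < size sq)%N ->
     (nth (0, 0) sq i).2 <= (nth (0, 0) sq j).1).

Lemma abs_cont_onS a b x y (F : R -> R) : a <= x -> y <= b ->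
  abs_cont_on a b F -> abs_cont_on x y F.
Proof.
move=> ax yb acF e e0; have [d d0 Hd] := acF e e0; exists d => // n c d' cd.
by apply: Hd => i; have [? [? ?]] := cd i; split; [lra | split => //; lra].
Qed.

Lemma abs_cont_on_seq a b (F : R -> R) : abs_cont_on a b F ->
  forall e : R, 0 < e -> exists2 d : R, 0 < d & forall sq, nonoverlapping a b sq ->
    \sum_(p <- sq) (p.2 - p.1) < d -> \sum_(p <- sq) `|F p.2 - F p.1| < e.
Proof.
move=> acF e e0; have [d d0 Hd] := acF e e0; exists d => // sq [h1 h2].
rewrite !(big_nth (0, 0)) !big_mkord => hs.
apply: (Hd (size sq) (fun i => (nth (0, 0) sq i).1) (fun i => (nth (0, 0) sq i).2)).
- by move=> i; apply: h1.
- by move=> i j ij; apply: h2.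
- exact: hs.
Qed.

Lemma lebesgue_measure_itv_oc x y : x <= y -> lebesgue_measure `]x, y] = (y - x)%:E.
Proof.
move=> xy; rewrite lebesgue_measure_itv /= lte_fin.
have [xy'|yx] := ltP x y; first by rewrite EFinB.
have -> : y = x by apply/eqP; rewrite eq_le xy yx.
by rewrite subrr.
Qed.

Lemma lebesgue_measure_setI_itv_ocD U a x y : measurable U -> a <= x -> x <= y ->
  lebesgue_measure (U `&` `]a, y]) =
  (lebesgue_measure (U `&` `]a, x]) + lebesgue_measure (U `&` `]x, y]))%E.
Proof.
move=> mU ax xy.
have -> : U `&` `]a, y] = (U `&` `]a, x]) `|` (U `&` `]x, y]).
  apply/seteqP; split => z /=; rewrite !in_itv /=.
    move=> [Uz /andP[az zy]]; have [zx|xz] := leP z x.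
      by left; split => //; rewrite az.
    by right; split => //; rewrite zy.
  by move=> [[Uz /andP[az zx]]|[Uz /andP[xz zy]]]; split => //; apply/andP; split; lra.
rewrite measureU //; try by apply: measurableI => //; exact: measurable_itv.
apply/seteqP; split => z //= [[_ /andP[_ zx]] [_ /andP[xz _]]].
by move: zx xz; rewrite !bnd_simp; lra.
Qed.

Definition nonoverlapping_in U a x sq := nonoverlapping a x sq /\
  ((\sum_(p <- sq) (p.2 - p.1))%:E <= lebesgue_measure (U `&` `]a, x]))%E.

Lemma nonoverlapping_in_nil U a : nonoverlapping_in U a a [::].
Proof. by split; [split => // i | rewrite big_nil; apply: measure_ge0]. Qed.

Lemma nonoverlapping_in_le U a x y sq : measurable U -> x <= y ->
  nonoverlapping_in U a x sq -> nonoverlapping_in U a y sq.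
Proof.
move=> mU xy [[h1 h2] h3]; split.
  by split => // i /h1 [? [? ?]]; split => //; split => //; lra.
apply: (le_trans h3); apply: le_measure; rewrite ?inE.
- by apply: measurableI => //; exact: measurable_itv.
- by apply: measurableI => //; exact: measurable_itv.
move=> z /= [Uz]; rewrite !in_itv /= => /andP[az zx].
by split => //; apply/andP; split; lra.
Qed.

Lemma nonoverlapping_in_rcons U a x y sq : measurable U ->
  a <= x -> x <= y -> `]x, y] `<=` U -> nonoverlapping_in U a x sq ->
  nonoverlapping_in U a y (rcons sq (x, y)).
Proof.
move=> mU ax xy xyU [[h1 h2] h3]; split; first split.
- move=> i; rewrite size_rcons ltnS leq_eqVlt => /orP[/eqP ->|isq].
    by rewrite nth_rcons ltnn eqxx /=; split => //; split => //.
  rewrite nth_rcons isq; have [? [? ?]] := h1 i isq; split => //; split => //; lra.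
- move=> i j ij; rewrite size_rcons ltnS leq_eqVlt => /orP[/eqP jE|jsq].
    have isq : (i < size sq)%N by rewrite -jE.
    rewrite jE (nth_rcons _ _ _ (size sq)) ltnn eqxx /= nth_rcons isq.
    by have [_ [_ ?]] := h1 i isq.
  have isq : (i < size sq)%N by apply: ltn_trans ij jsq.
  by rewrite !nth_rcons isq jsq; apply: h2.
- rewrite big_rcons /= EFinD (lebesgue_measure_setI_itv_ocD mU ax xy).
  by rewrite (setIidr xyU) (lebesgue_measure_itv_oc xy) leeD.
Qed.

End NonoverlappingFamilies.

Section IncrementCover.
Variables (R : realType) (a b e M : R) (H G : R -> R) (U : set R).
Hypotheses (ab : a <= b) (e0 : 0 < e) (mU : measurable U).
Hypothesis U_nbhs : forall s, a <= s <= b -> U s ->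
  exists2 k : R, 0 < k & forall z, `|z - s| < k -> U z.
Hypothesis H_local : forall s, a <= s <= b -> ~ U s -> exists2 k : R, 0 < k &
  forall x y : R, s - k < x -> x <= s -> s <= y -> y < s + k -> - e * (y - x) <= H y - H x.
Hypothesis H_global : forall x y, a <= x -> x <= y -> y <= b ->
  - `|G y - G x| - M * (y - x) <= H y - H x.

Local Definition covered_up_to x := exists sq, nonoverlapping_in U a x sq /\
  - e * (x - a) - \sum_(p <- sq) (`|G p.2 - G p.1| + M * (p.2 - p.1)) <= H x - H a.

Local Lemma covered_step s : a <= s <= b -> exists2 k : R, 0 < k &
  forall x y : R, s - k < x -> x <= s -> s <= y -> y < s + k -> y <= b -> a <= x ->
    covered_up_to x -> covered_up_to y.
Proof.
move=> sin; have [Us|nUs] := pselect (U s).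
  have [k k0 Hk] := U_nbhs sin Us.
  exists k => // x y h1 h2 h3 h4 h5 h6 [sq [fsq Hsq]].
  exists (rcons sq (x, y)); split.
    apply: nonoverlapping_in_rcons => //; first lra.
    move=> z /=; rewrite in_itv /= => /andP[xz zy]; apply: Hk.
    by rewrite ltr_norml; apply/andP; split; lra.
  rewrite big_rcons /=.
  have xy : x <= y by lra.
  have := H_global h6 xy h5.
  have : 0 <= e * (y - x) by rewrite mulr_ge0 ?(ltW e0) //; lra.
  lra.
have [k k0 Hk] := H_local sin nUs.
exists k => // x y h1 h2 h3 h4 h5 h6 [sq [fsq Hsq]].
exists sq; split; first by apply: nonoverlapping_in_le fsq => //; lra.
by have := Hk x y h1 h2 h3 h4; lra.
Qed.

Lemma increment_lower_bound_cover : exists sq, nonoverlapping_in U a b sq /\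
  - e * (b - a) - \sum_(p <- sq) (`|G p.2 - G p.1| + M * (p.2 - p.1)) <= H b - H a.
Proof.
pose S := [set x | (a <= x <= b) /\ covered_up_to x].
have Sa : S a.
  split; first by rewrite lexx ab.
  exists [::]; split; first exact: nonoverlapping_in_nil.
  by rewrite big_nil !subrr mulr0; lra.
have hsup : has_sup S by split; [exists a | exists b => z [/andP[_ zb] _]].
have as_ : a <= sup S by apply: sup_upper_bound hsup _ Sa.
have sb : sup S <= b by apply: ge_sup; [exists a | move=> z [/andP[_ zb] _]].
have sin : a <= sup S <= b by rewrite as_ sb.
have [k k0 st] := covered_step sin.
have [x [/andP[ax xb] Px] xs] := sup_adherent k0 hsup.
have xles : x <= sup S by apply: sup_upper_bound => //; split => //; rewrite ax xb.
have sEb : sup S = b.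
  apply/eqP; rewrite eq_le sb /= leNgt; apply/negP => sb'.
  have sk : sup S < Num.min (sup S + k) b by rewrite lt_min sb' andbT; lra.
  have [+ +] := midf_lt sk; rewrite lt_min => sy /andP[yk yb].
  move: ((sup S + Num.min (sup S + k) b) / 2) sy yk yb => y sy yk yb.
  have Py := st x y (ltac:(lra)) xles (ltac:(lra)) yk (ltW yb) ax Px.
  have : y <= sup S by apply: sup_upper_bound => //; split => //; apply/andP; split; lra.
  lra.
by apply: (st x b) => //; lra.
Qed.

End IncrementCover.

Lemma is_derive_ge0_local_increment (R : realType) (H : R -> R) (s d : R) :
  is_derive s 1 H d -> 0 <= d -> forall e : R, 0 < e -> exists2 k : R, 0 < k &
  forall x y : R, s - k < x -> x <= s -> s <= y -> y < s + k -> - e * (y - x) <= H y - H x.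
Proof.
move=> hd d0 e e0; have [k k0 Hk] := is_derive_diff_quotient hd e0.
exists k => // x y h1 h2 h3 h4.
have right : - e * (y - s) <= H y - H s.
  have [ys|ys] := eqVneq y s; first by rewrite ys !subrr mulr0.
  have hy : 0 < y - s by rewrite lt_neqAle eq_sym subr_eq0 ys subr_ge0 h3.
  have := Hk (y - s) (lt0r_neq0 hy) (ltac:(rewrite gtr0_norm //; lra)).
  rewrite addrCA subrr addr0 ltr_norml => /andP[H1 _].
  set q := (y - s)^-1 * (H y - H s) in H1.
  have -> : H y - H s = (y - s) * q by rewrite /q mulrA divff ?mul1r // gt_eqF.
  nra.
have left : - e * (s - x) <= H s - H x.
  have [xs|xs] := eqVneq x s; first by rewrite xs !subrr mulr0.
  have hx : x - s < 0 by rewrite subr_lt0 lt_neqAle xs h2.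
  have := Hk (x - s) (ltr0_neq0 hx) (ltac:(rewrite ltr0_norm //; lra)).
  rewrite addrCA subrr addr0 ltr_norml => /andP[H1 _].
  set q := (x - s)^-1 * (H x - H s) in H1.
  have -> : H s - H x = - ((x - s) * q) by rewrite /q mulrA divff ?mul1r ?opprB // lt_eqF.
  nra.
lra.
Qed.

Lemma negligible_open_cover (R : realType) (N : set R) (d : R) :
  (@lebesgue_measure R).-negligible N -> 0 < d ->
  exists U : set R, [/\ open U, N `<=` U & (lebesgue_measure U < d%:E)%E].
Proof.
move=> [A [mA muA NA]] d0.
have muAfin : (lebesgue_measure A < +oo)%E by rewrite muA ltry.
have [U [oU AU muUA]] := lebesgue_regularity_outer mA muAfin d0.
exists U; split => //; first by move=> x /NA /AU.
have mU : measurable U by exact: measurable_realfun.open_measurable.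
rewrite (measureDI (@lebesgue_measure R) mU mA).
have UA0 : (lebesgue_measure (U `&` A) <= 0)%E.
  by rewrite -muA; apply: le_measure; rewrite ?inE //; exact: measurableI.
apply: (@le_lt_trans _ _ (lebesgue_measure (U `\` A) + 0)%E); last by rewrite adde0.
exact: leeD.
Qed.

Lemma ae_ger0_derive_ndecr (R : realType) (a b M : R) (H G : R -> R) :
  a <= b -> 0 <= M ->
  {ae @lebesgue_measure R, forall s, a < s < b ->
     exists2 d : R, 0 <= d & is_derive s 1 H d} ->
  (forall x y, a <= x -> x <= y -> y <= b ->
     - `|G y - G x| - M * (y - x) <= H y - H x) ->
  abs_cont_on a b G -> H a <= H b.
Proof.
move=> ab M0 derH HG acG; rewrite leNgt; apply/negP => Hlt.
(* The error terms e (b - a), e (from [AC]) and e (from [M]) total less than H a - H b. *)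
pose e := (H a - H b) / (b - a + 3).
have e0 : 0 < e by apply: divr_gt0; lra.
have eE : e * (b - a + 3) = H a - H b by rewrite /e divfK //; apply: lt0r_neq0; lra.
have [d1 d10 AC] := abs_cont_on_seq acG e0.
pose d := Num.min d1 (e / (M + 1)).
have d0 : 0 < d by rewrite lt_min d10 divr_gt0 //; lra.
have neg1 x : (@lebesgue_measure R).-negligible [set x].
  by apply/negligibleP; [exact: measurable_set1 | exact: lebesgue_measure_set1].
have [U [oU NU muU]] :=
  negligible_open_cover (negligibleU (negligibleU derH (neg1 a)) (neg1 b)) d0.
have mU : measurable U by exact: measurable_realfun.open_measurable.
have U_nbhs s : a <= s <= b -> U s ->
    exists2 k : R, 0 < k & forall z, `|z - s| < k -> U z.
  move=> _ Us; move/(_ s Us): oU => /nbhs_ballP[k k0 Hk].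
  by exists k => // z hz; apply: Hk; rewrite /ball /= -normrN opprB.
have H_local s : a <= s <= b -> ~ U s -> exists2 k : R, 0 < k &
    forall x y : R, s - k < x -> x <= s -> s <= y -> y < s + k ->
      - e * (y - x) <= H y - H x.
  move=> /andP[a_le_s s_le_b] nUs.
  have sa : s != a by apply/eqP => sa; apply: nUs; apply: NU; left; right.
  have sb : s != b by apply/eqP => sb; apply: nUs; apply: NU; right.
  have sin : a < s < b by rewrite !lt_neqAle eq_sym sa sb a_le_s s_le_b.
  have [d' d'0 hd] := contrapT (fun nP => nUs (NU s (or_introl (or_introl nP)))) sin.
  exact: is_derive_ge0_local_increment hd d'0 e e0.
have [sq [[fsq flen] Hsq]] := increment_lower_bound_cover ab e0 mU U_nbhs H_local HG.
have slen : \sum_(p <- sq) (p.2 - p.1) < d.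
  rewrite -lte_fin; apply: (le_lt_trans flen); apply: le_lt_trans muU.
  apply: le_measure; rewrite ?inE //.
  by apply: measurableI => //; exact: measurable_itv.
have sG := AC sq fsq (lt_le_trans slen (ltac:(by rewrite ge_min lexx) : d <= d1)).
have sM : M * \sum_(p <- sq) (p.2 - p.1) <= e.
  have dM : d <= e / (M + 1) by rewrite ge_min lexx orbT.
  apply: (le_trans (ler_wpM2l M0 (ltW (lt_le_trans slen dM)))).
  by rewrite mulrA ler_pdivrMr; lra.
move: Hsq; rewrite big_split /= -mulr_sumr.
have : 0 < e * (b - a + 3) by apply: mulr_gt0; lra.
lra.
Qed.

Lemma is_derive_Rintegral_itv (R : realType) (f : R -> R) (a x : R) :
  continuous f -> a < x ->
  is_derive x 1 (fun y => \int[@lebesgue_measure R]_(z in [set` `[a, y]]) f z)%R (f x).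
Proof.
move=> cf ax.
have intf : (@lebesgue_measure R).-integrable `[a, x + 1] (EFin \o f).
  apply: continuous_compact_integrable; first exact: segment_compact.
  exact: continuous_subspaceT.
have [der val] := continuous_FTC1_closed (ltr_pwDr ltr01 (lexx x)) intf ax (cf x).
by rewrite -val derive1E; apply: derivableP.
Qed.

Lemma primitive_comp_exists (R : realType) (T : R) (f u du : R -> R) :
  0 < T -> continuous f -> {within `[0, T], continuous u} ->
  (forall t, 0 < t < T -> is_derive t 1 u (du t)) ->
  exists F : R -> R, {within `[0, T], continuous (F \o u)} /\
    forall t, 0 < t < T -> is_derive t 1 (F \o u) (f (u t) * du t).
Proof.
move=> T0 cf cu du_u.
have [m _ um] := EVT_min (ltW T0) cu.
have u_gt t : 0 <= t <= T -> u m - 1 < u t.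
  by move=> tin; have := um t (ltac:(by rewrite in_itv /=)); lra.
(* Based strictly below [min u], so that [F] is differentiable on the range of [u]. *)
pose F x := (\int[@lebesgue_measure R]_(z in [set` `[u m - 1, x]]) f z)%R.
have dF x : u m - 1 < x -> is_derive x 1 F (f x) := is_derive_Rintegral_itv cf.
exists F; split.
  apply: within_continuous_comp => // y; rewrite inE => -[t tin <-].
  apply: differentiable_continuous; apply/derivable1_diffP.
  by have [] := dF _ (u_gt t (ltac:(by move: tin; rewrite /= in_itv))).
move=> t /andP[t0 tT]; apply: is_derive1_comp; last by apply: du_u; rewrite t0 tT.
by apply: dF; apply: u_gt; rewrite !ltW.
Qed.

Lemma lipschitz_of_derive_bound (R : realType) (T L : R) (g dg : R -> R) :
  (forall t, 0 < t < T -> is_derive t 1 g (dg t)) ->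
  {within `[0, T], continuous g} ->
  (forall t, 0 <= t <= T -> `|dg t| <= L) ->
  forall x y, 0 <= x -> x <= y -> y <= T -> `|g y - g x| <= L * (y - x).
Proof.
move=> hd cg hL x y x0 xy yT.
have sub : `[x, y] `<=` `[0, T].
  by move=> z; rewrite /= !in_itv /= => /andP[? ?]; apply/andP; split; lra.
have hd' z : z \in `]x, y[ -> is_derive z 1 g (dg z).
  by rewrite in_itv /= => /andP[? ?]; apply: hd; apply/andP; split; lra.
have [c c_in ->] := MVT_segment xy hd' (continuous_subspaceW sub cg).
rewrite normrM (ger0_norm (ltac:(lra) : 0 <= y - x)) ler_wpM2r //; first lra.
by apply: hL; move: c_in; rewrite in_itv /= => /andP[? ?]; apply/andP; split; lra.
Qed.

Lemma lipschitz_of_continuous_derive (R : realType) (T : R) (g dg : R -> R) :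
  0 <= T -> (forall t, 0 < t < T -> is_derive t 1 g (dg t)) ->
  {within `[0, T], continuous g} -> {within `[0, T], continuous dg} ->
  exists2 L : R, 0 <= L &
    forall x y, 0 <= x -> x <= y -> y <= T -> `|g y - g x| <= L * (y - x).
Proof.
move=> T0 hd cg cdg.
have cndg : {within `[0, T], continuous (fun t => `|dg t|)}.
  apply/subspace_continuousP => x xin; apply: cvg_norm.
  exact: (subspace_continuousP _ _).1 cdg x xin.
have [c _ hc] := EVT_max T0 cndg.
exists `|dg c| => //; apply: lipschitz_of_derive_bound hd cg _ => t tin.
by apply: hc; rewrite in_itv.
Qed.

Lemma integrable_ge0_primitive (R : realType) (T : R) (gamma : R -> R) :
  (forall t, 0 <= t <= T -> 0 <= gamma t) ->
  (@lebesgue_measure R).-integrable `[0, T] (EFin \o gamma) ->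
  exists G : R -> R, [/\ forall x, 0 <= G x, {homo G : x y / x <= y} &
    {ae @lebesgue_measure R, forall t, 0 < t < T -> is_derive t 1 G (gamma t)}].
Proof.
move=> g0 gint; pose g := gamma \_ `[0, T].
have g_ge0 x : 0 <= g x.
  by rewrite /g patchE; case: ifPn => // /set_mem /=; rewrite in_itv /=; exact: g0.
have intg : (@lebesgue_measure R).-integrable setT (EFin \o g).
  by rewrite /g -restrict_EFin -integrable_mkcond.
have intgS A : measurable A -> (@lebesgue_measure R).-integrable A (EFin \o g).
  by move=> mA; apply: integrableS intg.
pose G x := (\int[@lebesgue_measure R]_(t in [set` Interval (BLeft 0) (BRight x)]) g t)%R.
exists G; split.
- by move=> x; apply: Rintegral_ge0 => y _; exact: g_ge0.
- move=> x y xy; rewrite /G /Rintegral; apply: fine_le.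
  + exact: integrable_fin_num (intgS _ (measurable_itv _)).
  + exact: integrable_fin_num (intgS _ (measurable_itv _)).
  apply: ge0_subset_integral => //; try exact: measurable_itv.
  + by case/integrableP : (intgS _ (measurable_itv `[0, y])).
  + by move=> z _; rewrite lee_fin.
  + by move=> z /=; rewrite !in_itv /= => /andP[? ?]; apply/andP; split => //; lra.
have gloc : locally_integrable [set: R] g by apply: integrable_locally.
have := @FTC1 R g (BLeft 0) (fun y => intgS _ (measurable_itv _)) gloc.
apply: negligibleS => t /= nP; apply: contra_not nP => FTCt /andP[t0 tT].
have [der val] := FTCt (ltac:(by rewrite lte_fin)).
have <- : g t = gamma t by rewrite /g patchE mem_set //= in_itv /= !ltW.
by rewrite -val derive1E; apply: derivableP.
Qed.

Lemma periodic_solution_energy_ndecr (R : realType) (T : R)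
    (phi f gamma G g : R -> R) (h : R -> R -> R) (lam L : R) (u du : R -> R) :
  0 < lam <= 1 -> 0 <= L ->
  (forall t, 0 <= t <= T -> 0 <= gamma t) -> {homo G : x y / x <= y} ->
  {ae @lebesgue_measure R, forall t, 0 < t < T -> is_derive t 1 G (gamma t)} ->
  {ae @lebesgue_measure R, forall t : R, 0 <= t <= T ->
     forall x : R, h t x <= gamma t} ->
  (forall t, 0 < t < T -> is_derive t 1 g (f (u t) * du t)) ->
  (forall x y, 0 <= x -> x <= y -> y <= T -> `|g y - g x| <= L * (y - x)) ->
  periodic_solution T phi f h lam u du ->
  forall x y, 0 <= x -> x <= y -> y <= T ->
    phi (du x) + lam * g x + G x <= phi (du y) + lam * g y + G y.
Proof.
move=> /andP[lam0 lam1] L0 g0 Gmono dG hgam dg lip [_ [_ [_ [acE hae]]]] x y x0 xy yT.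
pose H t := phi (du t) + lam * g t + G t.
apply: (@ae_ger0_derive_ndecr _ x y (lam * L) H (phi \o du) xy).
- by apply: mulr_ge0 => //; exact: ltW.
- apply: (filterS3 (ae_filter_ringOfSetsType _)) hae dG hgam.
  move=> s hs_eq s_dG s_hgam /andP[xs sy].
  have sin : 0 < s < T by apply/andP; split; lra.
  have [s_der s_eq] := hs_eq sin.
  have hs := s_hgam (ltac:(apply/andP; split; lra)) (u s).
  have hphi : is_derive s 1 (phi \o du) ((phi \o du)^`()%classic s).
    by rewrite derive1E; apply: derivableP.
  (* By the equation, this derivative is gamma s - lam h(s, u s) >= 0. *)
  exists ((phi \o du)^`()%classic s + lam *: (f (u s) * du s) + gamma s).
    have := g0 s (ltac:(apply/andP; split; lra)) => gs0.
    have : lam * h s (u s) <= gamma s by nra.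
    change (lam *: (f (u s) * du s)) with (lam * (f (u s) * du s)); lra.
  exact: is_deriveD (is_deriveD hphi (is_deriveZ lam (dg s sin))) (s_dG sin).
- move=> x' y' xx' x'y' y'y.
  have := lip x' y' (ltac:(lra)) x'y' (ltac:(lra)); rewrite ler_norml => /andP[l1 _].
  have : lam * (- (L * (y' - x'))) <= lam * (g y' - g x').
    by apply: ler_wpM2l => //; exact: ltW.
  have := Gmono _ _ x'y'.
  have : - `|phi (du y') - phi (du x')| <= phi (du y') - phi (du x').
    by rewrite lerNl -normrN ler_norm.
  rewrite /H /=; lra.
- exact: abs_cont_onS acE.
Qed.

Lemma sub_le_of_ndecr_add (R : realType) (T : R) (E G : R -> R) :
  E 0 = E T -> (forall x, 0 <= G x) -> {homo G : x y / x <= y} ->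
  (forall x y, 0 <= x -> x <= y -> y <= T -> E x + G x <= E y + G y) ->
  forall s t, 0 <= s <= T -> 0 <= t <= T -> E t - E s <= G T.
Proof.
move=> ET G0 Gmono EGmono s t /andP[s0 sT] /andP[t0 tT].
have := G0 0; have := G0 t.
have [st|ts] := leP s t.
  have := EGmono 0 s (lexx _) s0 sT; have := EGmono t T t0 tT (lexx _).
  have := Gmono _ _ st; have := Gmono _ _ tT; lra.
have := EGmono t s t0 (ltW ts) sT; have := Gmono _ _ sT; lra.
Qed.

Lemma periodic_phi_derivative_bound (R : realType) (T K : R) (phi F u du : R -> R) :
  0 < T -> {homo phi : x y / x < y} -> phi 0 = 0 ->
  {within `[0, T], continuous u} ->
  right_derivative_on 0 T u du -> left_derivative_on 0 T u du ->
  u 0 = u T -> du 0 = du T ->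
  (forall s t, 0 <= s <= T -> 0 <= t <= T ->
     phi (du t) + F (u t) - (phi (du s) + F (u s)) <= K) ->
  forall t, 0 <= t <= T -> - K <= phi (du t) <= K.
Proof.
move=> T0 phiI phi0 cu ru lu uT duT osc t tin.
have phi_le := ltW_homo phiI.
have := osc t t tin tin => K0.
apply/andP; split.
  have [dt|dt] := leP 0 (du t); first by have := phi_le _ _ dt; rewrite phi0; lra.
  have [s [sin us ds]] := periodic_crossing_nonneg cu ru lu uT T0 duT tin dt.
  by have := osc t s tin sin; have := phi_le _ _ ds; rewrite phi0 us; lra.
have [dt|dt] := leP (du t) 0; first by have := phi_le _ _ dt; rewrite phi0; lra.
have [s [sin us ds]] := periodic_crossing_nonpos cu ru lu uT T0 duT tin dt.
by have := osc s t sin tin; have := phi_le _ _ ds; rewrite phi0 us; lra.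
Qed.

Lemma norm_le_of_homo_bound (R : realType) (phi psi : R -> R) (K x : R) :
  {homo phi : x y / x < y} -> cancel psi phi -> - K <= phi x <= K ->
  `|x| <= `|psi K| + `|psi (- K)|.
Proof.
move=> phiI psiK /andP[lo hi].
have up : x <= psi K by rewrite leNgt; apply/negP => /phiI; rewrite psiK; lra.
have dn : psi (- K) <= x by rewrite leNgt; apply/negP => /phiI; rewrite psiK; lra.
have := ler_norm (psi K); have := ler_norm (- psi (- K)); rewrite normrN.
have := normr_ge0 (psi K); have := normr_ge0 (psi (- K)).
by rewrite ler_norml; lra.
Qed.

Lemma periodic_solution_derivative_bound (R : realType) (T : R)
    (phi psi f gamma G : R -> R) (h : R -> R -> R) (lam : R) (u du : R -> R) :
  0 < T -> {homo phi : x y / x < y} -> cancel psi phi -> phi 0 = 0 ->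
  continuous f -> (forall t, 0 <= t <= T -> 0 <= gamma t) ->
  (forall x, 0 <= G x) -> {homo G : x y / x <= y} ->
  {ae @lebesgue_measure R, forall t, 0 < t < T -> is_derive t 1 G (gamma t)} ->
  {ae @lebesgue_measure R, forall t : R, 0 <= t <= T ->
     forall x : R, h t x <= gamma t} ->
  0 < lam <= 1 -> periodic_solution T phi f h lam u du ->
  forall t, 0 <= t <= T -> `|du t| <= `|psi (G T)| + `|psi (- G T)|.
Proof.
move=> T0 phiI psiK phi0 cf g0 G0 Gmono dG hgam lamb sol.
have [C1 [uT [duT _]]] := sol; have [cu [cdu [du_u _]]] := C1.
have [F [cFu dFu]] := primitive_comp_exists T0 cf cu du_u.
have cdFu : {within `[0, T], continuous (fun t => f (u t) * du t)}.
  have cfu : {within `[0, T], continuous (f \o u)}.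
    by apply: within_continuous_comp => // y _; exact: cf.
  apply/subspace_continuousP => x xin.
  by apply: cvgM; [exact: (subspace_continuousP _ _).1 cfu x xin |
                   exact: (subspace_continuousP _ _).1 cdu x xin].
have [L L0 lip] := lipschitz_of_continuous_derive (ltW T0) dFu cFu cdFu.
have Emono := periodic_solution_energy_ndecr lamb L0 g0 Gmono dG hgam dFu lip sol.
pose E t := phi (du t) + lam * F (u t).
have E0T : E 0 = E T by rewrite /E uT duT.
have osc := sub_le_of_ndecr_add E0T G0 Gmono Emono.
move=> t tin; apply: (norm_le_of_homo_bound phiI psiK).
have := periodic_phi_derivative_bound T0 phiI phi0 cu (C1_on_right_derivative C1)
  (C1_on_left_derivative C1) uT duT (K := G T) (F := fun x => lam * F x).
by move=> /(_ _ t tin); apply; exact: osc.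
Qed.

Lemma sub_le_of_derive_bound (R : realType) (T K : R) (u du : R -> R) :
  0 <= K -> (forall t, 0 < t < T -> is_derive t 1 u (du t)) ->
  {within `[0, T], continuous u} -> (forall t, 0 <= t <= T -> `|du t| <= K) ->
  forall s t, 0 <= s <= T -> 0 <= t <= T -> u t - u s <= K * T.
Proof.
move=> K0 du_u cu duK s t /andP[s0 sT] /andP[t0 tT].
have lip := lipschitz_of_derive_bound du_u cu duK.
have [st|ts] := leP s t.
  have := lip s t s0 st tT; rewrite ler_norml => /andP[_ l2].
  have : K * (t - s) <= K * T by apply: ler_wpM2l => //; lra.
  lra.
have := lip t s t0 (ltW ts) sT; rewrite ler_norml => /andP[l1 _].
have : K * (s - t) <= K * T by apply: ler_wpM2l => //; lra.
lra.
Qed.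

Lemma Rintegral_itv_norm_le (R : realType) (T K : R) (du : R -> R) :
  0 < T -> {within `[0, T], continuous du} -> (forall t, 0 <= t <= T -> `|du t| <= K) ->
  Rintegral (@lebesgue_measure R) `[0, T] (fun t => `|du t|) <= K * T.
Proof.
move=> T0 cdu duK.
have cndu : {within `[0, T], continuous (fun t => `|du t|)}.
  apply/subspace_continuousP => x xin; apply: cvg_norm.
  exact: (subspace_continuousP _ _).1 cdu x xin.
have -> : K * T = Rintegral (@lebesgue_measure R) `[0, T] (fun _ => K).
  rewrite Rintegral_cst; last exact: measurable_itv.
  have := lebesgue_measure_itv `[0, T]; rewrite /= lte_fin T0 /= oppr0 adde0.
  by move=> ->.
apply: le_Rintegral; first exact: measurable_itv.
- by apply: continuous_compact_integrable; first exact: segment_compact.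
- apply: continuous_compact_integrable; first exact: segment_compact.
  exact: continuous_subspaceT (@cst_continuous _ _ K).
- by move=> t; rewrite /= in_itv /= => tin; apply: duK.
Qed.

Unset Implicit Arguments.

Theorem lemma2p5 (R : realType) (T : R) (phi gamma : R -> R) :
  0 < T ->
  incr_homeo_fix0 phi ->
  (forall t : R, 0 <= t <= T -> 0 <= gamma t) ->
  (@lebesgue_measure R).-integrable `[0%R, T]%classic (EFin \o gamma) ->
  (exists K0 : R,
     forall (f : R -> R) (h : R -> R -> R),
       continuous f -> caratheodory T h ->
       {ae @lebesgue_measure R, forall t : R, 0 <= t <= T ->
          forall x : R, h t x <= gamma t} ->
       forall (lam : R) (u du : R -> R),
         0 < lam <= 1 -> periodic_solution T phi f h lam u du ->
         (forall s t : R, 0 <= s <= T -> 0 <= t <= T -> u t - u s <= K0) /\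
         Rintegral (@lebesgue_measure R) `[0%R, T]%classic
           (fun t => `|du t|) <= K0) /\
  (forall (f : R -> R) (h : R -> R -> R),
     continuous f -> caratheodory T h ->
     {ae @lebesgue_measure R, forall t : R, 0 <= t <= T ->
        forall x : R, h t x <= gamma t} ->
     forall l1 l2 : R, l1 < l2 ->
     exists2 K1 : R, 0 < K1 &
       forall (lam : R) (u du : R -> R),
         0 < lam <= 1 -> periodic_solution T phi f h lam u du ->
         (forall t : R, 0 <= t <= T -> l1 <= u t <= l2) ->
         forall t : R, 0 <= t <= T -> `|du t| <= K1).
Proof.
move=> T0 [phiI [_ [[psi [_ [psiK _]]] phi0]]] g0 gint.
have [G [G0 Gmono dG]] := integrable_ge0_primitive g0 gint.
pose K := `|psi (G T)| + `|psi (- G T)|.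
have K0 : 0 <= K by rewrite addr_ge0.
have duK := periodic_solution_derivative_bound T0 phiI psiK phi0 _ g0 G0 Gmono dG.
split.
  exists (K * T) => f h cf _ hgam lam u du lamb sol.
  have [[cu [cdu [du_u _]]] _] := sol.
  have bound := duK _ _ _ _ _ cf hgam lamb sol.
  split; first exact: sub_le_of_derive_bound K0 du_u cu bound.
  exact: Rintegral_itv_norm_le T0 cdu bound.
move=> f h cf _ hgam l1 l2 _; exists (K + 1) => [|lam u du lamb sol _ t tin].
  by rewrite ltr_pwDr.
by have := duK _ _ _ _ _ cf hgam lamb sol t tin; rewrite -/K; lra.
Qed.
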